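(* Let $f$ be a real function on $\mathbb{T}^\kappa$ and $g$ a real function on $\mathbb{T}$. Fix $0<\alpha\le1$ and put $\gamma=1-\alpha$. Then $$\int_a^b f(t)\,({}_a\Delta_h^{\alpha}g)(t)\,\Delta t=h^\gamma f(\rho(b))g(b)-h^\gamma f(a)g(a)+\int_a^{\rho(b)}({}_h\Delta_{\rho(b)}^{\alpha}f)(t)\,g(\sigma(t))\,\Delta t$$ $$\quad+\frac{\gamma}{\Gamma(\gamma+1)}g(a)\Bigl(\int_a^b(t+\gamma h-a)_h^{(\gamma-1)}f(t)\Delta t-\int_{\sigma(a)}^{b}(t+\gamma h-\sigma(a))_h^{(\gamma-1)}f(t)\Delta t\Bigr).$$
   Context: Let $a\in\mathbb{R}$, $h>0$, $b=a+kh$ with $k\in\mathbb{N}$, $k\ge2$, $\mathbb{T}=\{a,a+h,\dots,b\}$, $\mathbb{T}^\kappa=\mathbb{T}\setminus\{b\}$, $\sigma(t)=t+h$, $\rho(t)=t-h$, $G^\Delta(t)=(G(t+h)-G(t))/h$. For $c\le d$, $\int_c^dG(s)\Delta s:=h\sum_{j=0}^{(d-c)/h-1}G(c+jh)$. $h$-factorial: $x_h^{(y)}:=h^y\Gamma(\frac{x}{h}+1)/\Gamma(\frac{x}{h}+1-y)$ (division at a pole yields zero). For $\nu\ge0$, $c\in\mathbb{T}$, $G$ defined on $\{s\in\mathbb{T}:s\le c\}$ and $t\in\mathbb{T}$, $t\le c$: $({}_a\Delta_h^{-\nu}G)(t+\nu h):=h^\nu G(t)+\frac{\nu}{\Gamma(\nu+1)}\int_a^t(t+\nu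 h-\sigma(s))_h^{(\nu-1)}G(s)\Delta s$, $({}_h\Delta_c^{-\nu}G)(t-\nu h):=h^\nu G(t)+\frac{\nu}{\Gamma(\nu+1)}\int_{\sigma(t)}^{\sigma(c)}(s+\nu h-\sigma(t))_h^{(\nu-1)}G(s)\Delta s$. For $0<\alpha\le1$, $\gamma=1-\alpha$, $t\in\mathbb{T}$, $t<c$: left fractional difference $({}_a\Delta_h^{\alpha}G)(t):=[\tau\mapsto({}_a\Delta_h^{-\gamma}G)(\tau+\gamma h)]^\Delta(t)$; right fractional difference with endpoint $c$: $({}_h\Delta_c^{\alpha}G)(t):=-[\tau\mapsto({}_h\Delta_c^{-\gamma}G)(\tau-\gamma h)]^\Delta(t)$. *)

From Stdlib Require Import Reals Lra Lia ClassicalEpsilon.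
Open Scope R_scope.

Fixpoint rsum (n : nat) (F : nat -> R) : R :=
  match n with O => 0 | S m => rsum m F + F m end.

(* Euler Gamma function via Gauss' limit formula
   Gamma z = lim n! n^z / (z (z+1) ... (z+n)), valid for z not in {0,-1,-2,...}. *)
Fixpoint rprod (n : nat) (F : nat -> R) : R :=
  match n with O => 1 | S m => rprod m F * F m end.

Definition gauss_seq (z : R) (n : nat) : R :=
  INR (Factorial.fact n) * Rpower (INR n) z / rprod (S n) (fun i => z + INR i).

Definition Gamma (z : R) : R :=
  epsilon (inhabits 0) (fun l => Un_cv (gauss_seq z) l).

Definition is_pole (z : R) : Prop := exists n : nat, z = - INR n.

(* h-factorial x_h^(y) = h^y Gamma(x/h+1) / Gamma(x/h+1-y); zero when the
   denominator argument is a pole of Gamma. *)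
Definition hfact (h x y : R) : R :=
  if excluded_middle_informative (is_pole (x / h + 1 - y)) then 0
  else Rpower h y * Gamma (x / h + 1) / Gamma (x / h + 1 - y).

Definition tsigma (h t : R) : R := t + h.
Definition trho (h t : R) : R := t - h.

(* number of steps (d-c)/h, for c <= d in the time scale *)
Definition nsteps (h c d : R) : nat := Z.to_nat (up ((d - c) / h) - 1).

(* delta integral: int_c^d G(s) Δs = h * sum_{j=0}^{(d-c)/h - 1} G(c + j h) *)
Definition dint (h c d : R) (G : R -> R) : R :=
  h * rsum (nsteps h c d) (fun j => G (c + INR j * h)).

Definition ddelta (h : R) (G : R -> R) (t : R) : R := (G (t + h) - G t) / h.

(* (a Δ_h^{-nu} G)(t + nu h), as a function of t *)
Definition left_fsum (h a nu : R) (G : R -> R) (t : R) : R :=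
  Rpower h nu * G t
  + nu / Gamma (nu + 1) *
    dint h a t (fun s => hfact h (t + nu * h - tsigma h s) (nu - 1) * G s).

(* (h Δ_c^{-nu} G)(t - nu h), as a function of t *)
Definition right_fsum (h c nu : R) (G : R -> R) (t : R) : R :=
  Rpower h nu * G t
  + nu / Gamma (nu + 1) *
    dint h (tsigma h t) (tsigma h c)
      (fun s => hfact h (s + nu * h - tsigma h t) (nu - 1) * G s).

Definition left_fdiff (h a alpha : R) (G : R -> R) (t : R) : R :=
  ddelta h (left_fsum h a (1 - alpha) G) t.

Definition right_fdiff (h c alpha : R) (G : R -> R) (t : R) : R :=
  - ddelta h (right_fsum h c (1 - alpha) G) t.

From Stdlib Require Import Reals Lra Lia ZArith.
Open Scope R_scope.

(* Sampling every function on the grid a + i h turns all delta integrals into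
   finite sums, the left fractional sum of g into the sequence
   p g_i + q Σ_{j<i} φ_{i-1-j} g_j (a "past" convolution with the h-factorial
   kernel φ_m = ((m+ν)h)_h^(ν-1)) and the right fractional sum of f into
   p f_i + q Σ_{m<n-i} φ_m f_{i+1+m} (a "future" convolution).  The theorem
   then becomes a purely algebraic identity between finite sums, valid for an
   arbitrary kernel φ and arbitrary coefficients p, q: nothing about Gamma or
   the h-factorial is used.  That identity follows from Abel's summation by
   parts (for the p-part) and from the duality Σ_i F_i (φ*G)_i = Σ_j (φ⋆F)_j G_j
   between the past convolution φ*G and the future convolution φ⋆F, which is a reindexing of a
   triangular double sum (for the q-part). *)

Lemma rsum_ext n F G :
  (forall j, (j < n)%nat -> F j = G j) -> rsum n F = rsum n G.
Proof.
  induction n as [|n IH]; intros HFG; simpl; [reflexivity|].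
  rewrite IH by (intros; apply HFG; lia). rewrite HFG by lia. reflexivity.
Qed.

Lemma rsum_plus n X Y : rsum n (fun i => X i + Y i) = rsum n X + rsum n Y.
Proof. induction n as [|n IH]; simpl; [ring|]. rewrite IH. ring. Qed.

Lemma rsum_minus n X Y : rsum n (fun i => X i - Y i) = rsum n X - rsum n Y.
Proof. induction n as [|n IH]; simpl; [ring|]. rewrite IH. ring. Qed.

Lemma rsum_scal n c X : rsum n (fun i => c * X i) = c * rsum n X.
Proof. induction n as [|n IH]; simpl; [ring|]. rewrite IH. ring. Qed.

Lemma rsum_shift n F : rsum (S n) F = F O + rsum n (fun i => F (S i)).
Proof. induction n as [|n IH]; simpl in *; [ring|]. rewrite IH. ring. Qed.

Lemma rsum_triangle N (F : nat -> nat -> R) :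
  rsum N (fun i => rsum (N - i) (F i))
  = rsum N (fun l => rsum (S l) (fun i => F i (l - i)%nat)).
Proof.
  induction N as [|N IH]; [reflexivity|].
  transitivity (rsum N (fun i => rsum (N - i) (F i) + F i (N - i)%nat)
                + rsum (S N - N) (F N)).
  - change (rsum (S N) (fun i => rsum (S N - i) (F i)))
      with (rsum N (fun i => rsum (S N - i) (F i)) + rsum (S N - N) (F N)).
    f_equal. apply rsum_ext; intros j Hj.
    replace (S N - j)%nat with (S (N - j)) by lia. reflexivity.
  - rewrite rsum_plus, IH, Nat.sub_succ_l, Nat.sub_diag by lia.
    simpl. rewrite Nat.sub_diag. ring.
Qed.

Lemma abel_summation n (F G : nat -> R) :
  rsum (S n) (fun i => F i * (G (S i) - G i))
  + rsum n (fun i => (F (S i) - F i) * G (S i))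
  = F n * G (S n) - F O * G O.
Proof. induction n as [|n IH]; simpl in *; [ring|]. lra. Qed.

Definition past_conv (ph G : nat -> R) (i : nat) : R :=
  rsum i (fun j => ph (i - 1 - j)%nat * G j).

Definition future_conv (ph F : nat -> R) (n i : nat) : R :=
  rsum (n - i) (fun m => ph m * F (i + 1 + m)%nat).

Lemma future_conv_last ph F n : future_conv ph F n n = 0.
Proof. unfold future_conv. rewrite Nat.sub_diag. reflexivity. Qed.

Lemma past_conv_succ ph G i :
  past_conv ph G (S i) = ph i * G O + past_conv ph (fun j => G (S j)) i.
Proof.
  unfold past_conv. rewrite rsum_shift.
  replace (S i - 1 - 0)%nat with i by lia. f_equal.
  apply rsum_ext; intros j Hj.
  replace (S i - 1 - S j)%nat with (i - 1 - j)%nat by lia. reflexivity.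
Qed.

Lemma conv_duality ph F G n :
  rsum (S n) (fun i => F i * past_conv ph G i)
  = rsum n (fun j => future_conv ph F n j * G j).
Proof.
  rewrite rsum_shift. unfold past_conv at 1. simpl rsum at 1.
  rewrite Rmult_0_r, Rplus_0_l.
  transitivity (rsum n (fun j => rsum (n - j) (fun m => G j * ph m * F (j + 1 + m)%nat))).
  - rewrite rsum_triangle. apply rsum_ext; intros l Hl.
    unfold past_conv. rewrite <- rsum_scal.
    apply rsum_ext; intros j Hj.
    replace (S l - 1 - j)%nat with (l - j)%nat by lia.
    replace (j + 1 + (l - j))%nat with (S l) by lia. ring.
  - apply rsum_ext; intros j Hj.
    rewrite Rmult_comm. unfold future_conv. rewrite <- rsum_scal.
    apply rsum_ext; intros m Hm. ring.
Qed.

Definition left_seq (p q : R) (ph G : nat -> R) (i : nat) : R :=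
  p * G i + q * past_conv ph G i.

Definition right_seq (p q : R) (ph F : nat -> R) (n i : nat) : R :=
  p * F i + q * future_conv ph F n i.

Lemma discrete_fractional_by_parts (p q : R) (ph F G : nat -> R) n :
  rsum (S n) (fun i => F i * (left_seq p q ph G (S i) - left_seq p q ph G i))
  = p * F n * G (S n) - p * F O * G O
    - rsum n (fun i => (right_seq p q ph F n (S i) - right_seq p q ph F n i) * G (S i))
    + q * G O * (rsum (S n) (fun i => ph i * F i) - rsum n (fun i => ph i * F (S i))).
Proof.
  set (T := future_conv ph F n).
  rewrite (rsum_ext (S n) _ (fun i => p * (F i * (G (S i) - G i))
             + q * (F i * past_conv ph G (S i)) - q * (F i * past_conv ph G i)))
    by (intros; unfold left_seq; ring).
  rewrite (rsum_ext n _ (fun i => p * ((F (S i) - F i) * G (S i))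
             + q * (T (S i) * G (S i)) - q * (T i * G (S i))))
    by (intros; unfold right_seq, T; ring).
  rewrite !rsum_minus, !rsum_plus, !rsum_scal.
  assert (abel : rsum (S n) (fun i => F i * (G (S i) - G i))
    = F n * G (S n) - F O * G O - rsum n (fun i => (F (S i) - F i) * G (S i)))
    by (pose proof (abel_summation n F G); lra).
  assert (duality_shifted : rsum (S n) (fun i => F i * past_conv ph G (S i))
    = G O * rsum (S n) (fun i => ph i * F i) + rsum n (fun j => T j * G (S j))).
  { rewrite (rsum_ext (S n) _ (fun i => G O * (ph i * F i)
               + F i * past_conv ph (fun j => G (S j)) i))
      by (intros; rewrite past_conv_succ; ring).
    rewrite rsum_plus, rsum_scal, conv_duality. reflexivity. }
  assert (future_shift : rsum n (fun i => T (S i) * G (S i))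
    = rsum n (fun j => T j * G j) - T O * G O).
  { pose proof (rsum_shift n (fun j => T j * G j)) as Hfirst.
    simpl rsum in Hfirst at 1. unfold T in Hfirst at 2.
    rewrite future_conv_last in Hfirst. fold T in Hfirst. lra. }
  assert (future_at_0 : rsum n (fun i => ph i * F (S i)) = T O).
  { unfold T, future_conv. rewrite Nat.sub_0_r. reflexivity. }
  rewrite abel, duality_shifted, conv_duality, future_shift, future_at_0.
  fold T. ring.
Qed.

Lemma nsteps_eq h c d n : 0 < h -> d - c = INR n * h -> nsteps h c d = n.
Proof.
  intros h_pos Hcd. unfold nsteps.
  replace ((d - c) / h) with (IZR (Z.of_nat n))
    by (rewrite <- INR_IZR_INZ, Hcd; field; lra).
  rewrite <- (up_tech (IZR (Z.of_nat n)) (Z.of_nat n)).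
  - rewrite Z.add_simpl_r. apply Nat2Z.id.
  - lra.
  - rewrite plus_IZR. simpl. lra.
Qed.

Lemma dint_steps h c d n G : 0 < h -> d - c = INR n * h ->
  dint h c d G = h * rsum n (fun j => G (c + INR j * h)).
Proof. intros h_pos Hcd. unfold dint. rewrite (nsteps_eq h c d n h_pos Hcd). reflexivity. Qed.

Definition grid (a h : R) (i : nat) : R := a + INR i * h.

Definition kernel (h nu : R) (m : nat) : R := hfact h ((INR m + nu) * h) (nu - 1).

Lemma grid_succ a h i : grid a h i + h = grid a h (S i).
Proof. unfold grid. rewrite S_INR. ring. Qed.

Lemma grid_0 a h : grid a h 0 = a.
Proof. unfold grid. simpl. ring. Qed.

Section Sampling.

Variables (h a : R).
Hypothesis h_pos : 0 < h.

Lemma dint_grid n G : dint h a (grid a h n) G = h * rsum n (fun i => G (grid a h i)).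
Proof. apply dint_steps; [exact h_pos | unfold grid; ring]. Qed.

Lemma left_fsum_grid nu G i :
  left_fsum h a nu G (grid a h i)
  = left_seq (Rpower h nu) (nu / Gamma (nu + 1) * h) (kernel h nu)
      (fun j => G (grid a h j)) i.
Proof.
  unfold left_fsum, left_seq, past_conv.
  rewrite (dint_steps h a _ i) by (exact h_pos || (unfold grid; ring)).
  rewrite Rmult_assoc. do 3 f_equal. apply rsum_ext; intros j Hj.
  unfold kernel, grid, tsigma. f_equal. f_equal.
  replace (INR i) with (INR (i - 1 - j) + 1 + INR j)
    by (rewrite <- S_INR, <- plus_INR; f_equal; lia).
  ring.
Qed.

Lemma right_fsum_grid nu F n i : (i <= n)%nat ->
  right_fsum h (grid a h n) nu F (grid a h i)
  = right_seq (Rpower h nu) (nu / Gamma (nu + 1) * h) (kernel h nu)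
      (fun j => F (grid a h j)) n i.
Proof.
  intros Hin. unfold right_fsum, right_seq, future_conv.
  rewrite (dint_steps h _ _ (n - i))
    by (exact h_pos || (unfold tsigma, grid; rewrite minus_INR by lia; ring)).
  rewrite Rmult_assoc. do 3 f_equal. apply rsum_ext; intros m Hm.
  unfold kernel, grid, tsigma. rewrite !plus_INR. simpl. f_equal; f_equal; ring.
Qed.

Lemma dint_left_fdiff alpha f g n :
  let L := left_seq (Rpower h (1 - alpha)) ((1 - alpha) / Gamma (1 - alpha + 1) * h)
             (kernel h (1 - alpha)) (fun j => g (grid a h j)) in
  dint h a (grid a h n) (fun t => f t * left_fdiff h a alpha g t)
  = rsum n (fun i => f (grid a h i) * (L (S i) - L i)).
Proof.
  intros L. rewrite dint_grid, <- rsum_scal. apply rsum_ext; intros i Hi.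
  unfold left_fdiff, ddelta. rewrite grid_succ, !left_fsum_grid.
  fold L. field. lra.
Qed.

Lemma dint_right_fdiff alpha f g n :
  let R := right_seq (Rpower h (1 - alpha)) ((1 - alpha) / Gamma (1 - alpha + 1) * h)
             (kernel h (1 - alpha)) (fun j => f (grid a h j)) n in
  dint h a (grid a h n) (fun t => right_fdiff h (grid a h n) alpha f t * g (tsigma h t))
  = - rsum n (fun i => (R (S i) - R i) * g (grid a h (S i))).
Proof.
  intros R. rewrite dint_grid, <- rsum_scal.
  rewrite <- (Rmult_1_l (rsum n (fun i => (R (S i) - R i) * g (grid a h (S i))))).
  rewrite Ropp_mult_distr_l, <- rsum_scal.
  apply rsum_ext; intros i Hi.
  unfold right_fdiff, ddelta, tsigma. rewrite grid_succ, !right_fsum_grid by lia.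
  fold R. field. lra.
Qed.

Lemma dint_kernel nu F n :
  dint h a (grid a h n) (fun t => hfact h (t + nu * h - a) (nu - 1) * F t)
  = h * rsum n (fun i => kernel h nu i * F (grid a h i)).
Proof.
  rewrite dint_grid. f_equal. apply rsum_ext; intros i Hi.
  unfold kernel, grid. do 2 f_equal. ring.
Qed.

Lemma dint_kernel_shifted nu F n :
  dint h (tsigma h a) (grid a h (S n))
    (fun t => hfact h (t + nu * h - tsigma h a) (nu - 1) * F t)
  = h * rsum n (fun i => kernel h nu i * F (grid a h (S i))).
Proof.
  rewrite (dint_steps h _ _ n) by (exact h_pos || (unfold tsigma, grid; rewrite S_INR; ring)).
  f_equal. apply rsum_ext; intros i Hi.
  unfold kernel, grid, tsigma. rewrite S_INR. f_equal; f_equal; ring.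
Qed.

End Sampling.

Theorem mainTheorem10 (a h b : R) (k : nat) (f g : R -> R) (alpha : R) :
  0 < h -> (2 <= k)%nat -> b = a + INR k * h ->
  0 < alpha -> alpha <= 1 ->
  let gam := 1 - alpha in
  dint h a b (fun t => f t * left_fdiff h a alpha g t)
  = Rpower h gam * f (trho h b) * g b - Rpower h gam * f a * g a
    + dint h a (trho h b) (fun t => right_fdiff h (trho h b) alpha f t * g (tsigma h t))
    + gam / Gamma (gam + 1) * g a *
      (dint h a b (fun t => hfact h (t + gam * h - a) (gam - 1) * f t)
       - dint h (tsigma h a) b
           (fun t => hfact h (t + gam * h - tsigma h a) (gam - 1) * f t)).
Proof.
  intros h_pos Hk Hb _ _ gam.
  destruct k as [|n]; [lia|].
  change (a + INR (S n) * h) with (grid a h (S n)) in Hb. subst b.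
  replace (trho h (grid a h (S n))) with (grid a h n)
    by (unfold trho; rewrite <- grid_succ; ring).
  rewrite dint_left_fdiff, dint_right_fdiff, dint_kernel, dint_kernel_shifted
    by exact h_pos.
  rewrite discrete_fractional_by_parts.
  rewrite grid_0. unfold gam. ring.
Qed.
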